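(* $\mathrm{conv}\sqsubseteq\mathcal{BI}\sqsubseteq\mathrm{Fin}^2$, while $\mathcal{BI}\not\sqsubseteq\mathrm{conv}$ and $\mathrm{Fin}^2\not\sqsubseteq\mathcal{BI}$.
   Context: An ideal on an infinite countable set $X$ is a family $\mathcal{I}\subseteq\mathcal{P}(X)$ closed under subsets and finite unions, containing all finite subsets, with $X\notin\mathcal{I}$. $\mathrm{conv}$ is the ideal on $\mathbb{Q}\cap[0,1]$ generated by the ranges of sequences in $\mathbb{Q}\cap[0,1]$ that converge in $[0,1]$ (i.e., $A\in\mathrm{conv}$ iff $A$ is covered by finitely many such ranges). $\mathrm{Fin}^2$: ideal on $\omega^2$ of all $A$ with only finitely many $n$ such that $\{m:(n,m)\in A\}$ is infinite. $\mathcal{BI}$: ideal on $\omega^3$ of all $A$ for which there is $k$ with $\{(j,l):(i,j,l)\in A\}\in\mathrm{Fin}^2$ for $i<k$ and finite for $i\ge k$. $\mathcal{I}\sqsubseteq\mathcal{J}$: there is a bijection $f:\bigcup\mathcal{J}\to\bigcup\mathcal{I}$ with $f^{-1}[A]\in\mathcal{J}$ for all $A\in\mathcal{I}$. *)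

From HB Require Import structures.
From mathcomp Require Import all_boot all_order all_algebra.
From mathcomp Require Import all_classical all_reals all_analysis.
From mathcomp Require Import Rstruct Rstruct_topology.
Set Implicit Arguments. Unset Strict Implicit. Unset Printing Implicit Defensive.
Import Order.TTheory GRing.Theory Num.Theory.
Local Open Scope classical_set_scope.
Local Open Scope ring_scope.

Definition Q01 := {q : rat | (0 <= q <= 1)%R}.

Definition Q01_to_R (x : Q01) : Rdefinitions.R := ratr (sval x).

Definition conv_seq (s : nat -> Q01) : Prop :=
  exists l : Rdefinitions.R, (0 <= l <= 1)%R /\
    ((fun n => Q01_to_R (s n)) @ \oo --> l).

Definition conv : set (set Q01) :=
  fun A => exists ss : seq (nat -> Q01),
    (forall s, s \in ss -> conv_seq s) /\
    A `<=` [set x | exists2 s, s \in ss & range s x].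

Definition Fin2 : set (set (nat * nat)) :=
  fun A => finite_set [set n | infinite_set [set m | A (n, m)]].

Definition BI : set (set (nat * nat * nat)) :=
  fun A => exists k : nat,
    (forall i, (i < k)%N -> Fin2 [set jl | A (i, jl.1, jl.2)]) /\
    (forall i, (k <= i)%N -> finite_set [set jl | A (i, jl.1, jl.2)]).

Definition ideal_below (X Y : Type) (I : set (set X)) (J : set (set Y)) : Prop :=
  exists f : Y -> X, bijective f /\ forall A, I A -> J (f @^-1` A).

(* Cut ]0, 1] into the harmonic intervals ]1/(i+2), 1/(i+1)] and cut each of
   them again harmonically, so that its cells accumulate only at its left end.
   Every cell contains infinitely many rationals, so numbering each cell by
   omega gives a bijection omega^3 -> Q cap [0, 1] whose first two coordinates
   name the cell.  A sequence converging to l has, beyond some slice i, only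
   finitely many terms in each slice, and in each slice only the finitely many
   cells near l can contain infinitely many terms: this is membership in BI.
   A pairing of omega with omega^2 turns BI into Fin2.

   No conv set is infinite in every subinterval of an interval: the terms of
   one convergent sequence can be avoided on a subinterval away from its
   limit.  Given g : Q cap [0, 1] -> omega^3 pulling BI back into conv, a
   diagonalisation over rational intervals shows that the first coordinate of
   g is bounded on some interval; repeating it with i + j yields an interval
   mapped into the BI set {i + j < N}, a contradiction.  Dually, for
   h : omega^3 -> omega^2 pulling Fin2 back into BI, some slice i is mapped
   into finitely many columns, so the preimage of a Fin2 set contains the
   whole slice omega^2. *)

From mathcomp Require Import all_boot all_order all_algebra.
From mathcomp Require Import all_classical all_reals all_analysis.
From mathcomp Require Import Rstruct Rstruct_topology.
From mathcomp Require Import lra.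
From Stdlib Require Cantor.
Set Implicit Arguments. Unset Strict Implicit. Unset Printing Implicit Defensive.
Import Order.TTheory GRing.Theory Num.Theory numFieldNormedType.Exports.
Local Open Scope classical_set_scope.
Local Open Scope ring_scope.

Lemma finite_nat_bounded (A : set nat) : finite_set A ->
  exists N, forall n, A n -> (n < N)%N.
Proof.
move=> /finite_seqP[s ->]; exists (\max_(n <- s) n).+1 => n /= ns.
by rewrite ltnS (leq_bigmax_seq (F := id)).
Qed.

Lemma unbounded_infinite (T : Type) (A : set T) (g : T -> nat) :
  (forall K, exists2 x, A x & (K <= g x)%N) -> infinite_set A.
Proof.
move=> unbounded /(finite_image g)/finite_nat_bounded[N gN].
have [x Ax] := unbounded N; apply/negP; rewrite -ltnNge.
by apply: gN; exists x.
Qed.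

Lemma infinite_unbounded (T : Type) (A : set T) (g : T -> nat) :
  injective g -> infinite_set A -> forall K, exists2 x, A x & (K <= g x)%N.
Proof.
move=> g_inj A_inf K; apply: contrapT => bounded; apply: A_inf.
apply: sub_finite_set (finite_preimage (in2W g_inj) (finite_II K)) => x Ax /=.
by rewrite ltnNge; apply/negP => Kx; apply: bounded; exists x.
Qed.

Lemma fibres_bijection (T : countType) (J : Type) (idx : T -> J) :
  (forall i, infinite_set [set x | idx x = i]) ->
  exists f : J * nat -> T, bijective f /\ forall p, idx (f p) = p.1.
Proof.
move=> fibres_inf.
have fibre_nat i : exists F : T -> nat, set_bij [set x | idx x = i] [set: nat] F.
  exact/card_set_bijP/eq_card_nat/fibres_inf/countableP.
have [F F_bij] := choice fibre_nat.
pose phi x := (idx x, F (idx x) x).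
have phi_inj : injective phi.
  move=> x y [exy Fxy]; have [_ F_inj _] := F_bij (idx x).
  by apply: F_inj; rewrite ?inE //= Fxy exy.
have phi_surj p : exists x, phi x = p.
  case: p => i n; have [_ _ F_surj] := F_bij i; have [x xi <-] := F_surj n I.
  by exists x; rewrite /phi xi.
have [f fK] := choice phi_surj.
exists f; split; first by exists phi => // x; apply: phi_inj; rewrite fK.
by move=> p; rewrite -[in RHS](fK p).
Qed.

Lemma rat_itvoo_infinite (R : archiRealFieldType) (a b : R) : a < b ->
  infinite_set [set q : rat | a < ratr q < b].
Proof.
move=> ab /finite_seqP[L eL].
have [q qab qL] : exists2 q : rat, a < ratr q < b & q \notin L.
  clear eL; elim: L a b ab => [|h L IH] a b ab.
    by have [q] := rat_in_itvoo ab; rewrite in_itv /=; exists q.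
  have [/andP[ah hb]|hab] := boolP (a < ratr h < b).
    have [q /andP[aq qh] qL] := IH a (ratr h) ah.
    exists q; first by rewrite aq (lt_trans qh hb).
    by rewrite in_cons negb_or qL andbT; apply: contraTneq qh => ->; rewrite ltxx.
  have [q qab qL] := IH a b ab; exists q => //.
  by rewrite in_cons negb_or qL andbT; apply: contraNneq hab => <-.
have : [set q : rat | a < ratr q < b] q by [].
by rewrite eL /= (negbTE qL).
Qed.

Lemma subinterval_apart (R : realFieldType) (a b l : R) : a < b ->
  exists c d, [/\ a <= c, c < d, d <= b & l < c \/ d < l].
Proof.
move=> ab; have [lm|ml] := ltrP l ((a + b) / 2).
  by exists ((a + 3 * b) / 4), b; split; [lra | lra | lra | left; lra].
by exists a, ((3 * a + b) / 4); split; [lra | lra | lra | right; lra].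
Qed.

(** * Harmonic cells *)

Section HarmonicCells.
Variable R : archiRealFieldType.
Implicit Types (a b y l : R) (j : nat).

Definition cell_lo a b j : R := a + (b - a) / j.+2%:R.
Definition cell_hi a b j : R := a + (b - a) / j.+1%:R.
Definition cell a b j : set R := [set y | cell_lo a b j < y <= cell_hi a b j].
Definition cell_index a b y : nat := (Num.truncn ((b - a) / (y - a))).-1.

Lemma cell_bounds a b j : a < b ->
  [/\ a < cell_lo a b j, cell_lo a b j < cell_hi a b j & cell_hi a b j <= b].
Proof.
move=> ab; have ba0 : 0 < b - a by rewrite subr_gt0.
rewrite /cell_lo /cell_hi; split.
- by rewrite ltrDl divr_gt0.
- by rewrite ltrD2l ltr_pM2l // ltf_pV2 ?posrE // ltr_nat.
- by rewrite -lerBrDl ler_pdivrMr // ler_peMr ?ler1n // ltW.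
Qed.

Lemma cell_indexP a b y j : a < y <= b -> cell_index a b y = j <-> cell a b j y.
Proof.
move=> /andP[ay yb]; have ya0 : 0 < y - a by rewrite subr_gt0.
have ba0 : 0 < b - a by rewrite subr_gt0 (lt_le_trans ay).
set t := (b - a) / (y - a).
have t1 : 1 <= t by rewrite ler_pdivlMr // mul1r lerD2r.
have lt_t n : (t < n.+2%:R) = (cell_lo a b n < y).
  by rewrite /cell_lo -ltrBrDl ltr_pdivrMr // mulrC -ltr_pdivrMr ?ltr0Sn.
have le_t n : (n.+1%:R <= t) = (y <= cell_hi a b n).
  by rewrite /cell_hi -lerBlDl ler_pdivlMr // mulrC -ler_pdivlMr ?ltr0Sn.
rewrite /cell_index -/t /cell /= -lt_t -le_t andbC -truncn_eq ?(le_trans ler01 t1) //.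
by split => [<-|/eqP -> //]; rewrite prednK ?truncn_gt0.
Qed.

Lemma cell_eventually_apart a b l : a < b ->
  exists K, forall j, (K <= j)%N -> l < cell_lo a b j \/ cell_hi a b j < l.
Proof.
move=> ab; have [la|al] := lerP l a.
  exists 0%N => j _; left; have [aj _ _] := cell_bounds j ab.
  exact: le_lt_trans aj.
exists (Num.truncn ((b - a) / (l - a))) => j Kj; right.
have la0 : 0 < l - a by rewrite subr_gt0.
rewrite /cell_hi -ltrBrDl ltr_pdivrMr ?ltr0Sn // mulrC -ltr_pdivrMr //.
by rewrite (lt_le_trans (truncnS_gt _)) // ler_nat ltnS.
Qed.

Definition harmonic_index y : nat * nat :=
  let i := cell_index 0 1 y in (i, cell_index (cell_lo 0 1 i) (cell_hi 0 1 i) y).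

Lemma harmonic_indexP y i j : 0 < y <= 1 ->
  harmonic_index y = (i, j) <-> cell (cell_lo 0 1 i) (cell_hi 0 1 i) j y.
Proof.
move=> y01; rewrite /harmonic_index; split => [[<- <-]|yij].
  by apply/cell_indexP => //; apply/cell_indexP.
have [lo_i lo_hi hi_i] := cell_bounds i (@ltr01 R).
have [lo_ij _ hi_ij] := cell_bounds j lo_hi.
have yi : cell 0 1 i y.
  by move: yij => /andP[y1 y2]; rewrite /cell /= (lt_trans lo_ij y1) (le_trans y2 hi_ij).
by rewrite (proj2 (cell_indexP _ y01) yi) (proj2 (cell_indexP _ yi) yij).
Qed.

End HarmonicCells.

Section ConvergentSequences.
Variables (R : realType) (T : Type) (u : nat -> T) (f : T -> R) (l : R).
Hypothesis u_cvg : (fun n => f (u n)) @ \oo --> l.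

Lemma cvg_finite_outside c d : l < c \/ d < l ->
  finite_set (range u `&` f @^-1` [set y | c <= y <= d]).
Proof.
move=> lcd.
have [e e0 le] : exists2 e, 0 < e & forall y, c <= y <= d -> e <= `|l - y|.
  case: lcd => ?; [exists (c - l) | exists (l - d)]; rewrite ?subr_gt0 // => y /andP[? ?].
    by rewrite ler_normr; apply/orP; right; lra.
  by rewrite ler_normr; apply/orP; left; lra.
have [M _ near_l] := proj1 (cvgrPdist_lt _ _) u_cvg e e0.
apply: sub_finite_set (finite_image u (finite_II M)).
move=> _ [[n _ <-] fun_cd]; exists n => //=; rewrite ltnNge; apply/negP => Mn.
by have := near_l n Mn; rewrite ltNge le.
Qed.

Lemma cvg_finite_cells a b : a < b ->
  exists K, forall j, (K <= j)%N -> finite_set (range u `&` f @^-1` cell a b j).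
Proof.
move=> ab; have [K apart] := cell_eventually_apart l ab.
exists K => j Kj; apply: sub_finite_set (cvg_finite_outside (apart j Kj)).
by move=> x [ux /andP[lo hi]]; split; rewrite //= hi ltW.
Qed.

End ConvergentSequences.

Local Notation RR := Rdefinitions.R.
Local Notation toR := Q01_to_R.

Lemma Q01_to_R_inj : injective toR.
Proof.
move=> [p hp] [q hq]; rewrite /Q01_to_R /= => epq; apply: val_inj => /=.
by apply: le_anti; rewrite -!(ler_rat RR) epq lexx.
Qed.

Lemma Q01_to_R_itv x : 0 <= toR x <= 1.
Proof.
case: x => q hq; case/andP: (hq) => q0 q1; rewrite /Q01_to_R /=.
by rewrite ler0q q0 -(rmorph1 (ratr : rat -> RR)) ler_rat.
Qed.

Lemma Q01_itvoo_infinite (a b : RR) : 0 <= a -> a < b -> b <= 1 ->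
  infinite_set (toR @^-1` [set y | a < y < b]).
Proof.
move=> a0 ab b1 fin; apply: (rat_itvoo_infinite ab).
apply: sub_finite_set (finite_image val fin) => q /andP[aq qb].
have q01 : 0 <= q <= 1.
  by rewrite -(ler0q RR) -(ler_rat RR) rmorph1 !ltW // (le_lt_trans a0, lt_le_trans qb).
by exists (exist _ q q01) => //=; rewrite /Q01_to_R /= aq.
Qed.

(** * The ideals Fin2 and BI *)

Lemma Fin2_sub (A B : set (nat * nat)) : A `<=` B -> Fin2 B -> Fin2 A.
Proof.
move=> AB; apply: sub_finite_set => n /= A_inf B_fin; apply: A_inf.
by apply: sub_finite_set B_fin => m /AB.
Qed.

Lemma Fin2_setU (A B : set (nat * nat)) : Fin2 A -> Fin2 B -> Fin2 (A `|` B).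
Proof.
move=> A_fin B_fin.
apply: (sub_finite_set (B := [set n | infinite_set [set m | A (n, m)]] `|`
                             [set n | infinite_set [set m | B (n, m)]])).
  move=> n /= AB_inf; apply: contrapT => /not_orP[/contrapT A_fin' /contrapT B_fin'].
  by apply: AB_inf; have := conj A_fin' B_fin'; rewrite -finite_setU.
by rewrite finite_setU.
Qed.

Lemma Fin2_columns_finite (A : set (nat * nat)) :
  (forall n, finite_set [set m | A (n, m)]) -> Fin2 A.
Proof. by move=> col_fin; apply: (sub_finite_set _ (finite_set0 _)) => n /=; apply. Qed.

Lemma Fin2_finite (A : set (nat * nat)) : finite_set A -> Fin2 A.
Proof.
move=> A_fin; apply: Fin2_columns_finite => n.
by apply: sub_finite_set (finite_image snd A_fin) => m Anm; exists (n, m).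
Qed.

Lemma Fin2_fst_bounded (A : set (nat * nat)) N :
  (forall p, A p -> (p.1 < N)%N) -> Fin2 A.
Proof.
move=> bounded; apply: sub_finite_set (finite_II N) => n /= inf.
apply: contrapT => nN; apply: inf; apply: (sub_finite_set _ (finite_set0 _)) => m Anm.
by apply: nN; apply: bounded Anm.
Qed.

Lemma not_Fin2_setT : ~ Fin2 [set: nat * nat].
Proof. by move=> fin; apply: infinite_nat; apply: sub_finite_set fin => n _; exact: infinite_nat. Qed.

Lemma BI_sub (A B : set (nat * nat * nat)) : A `<=` B -> BI B -> BI A.
Proof.
move=> AB [k [B_low B_high]]; exists k; split => i ik.
  by apply: Fin2_sub (B_low i ik) => jl /AB.
by apply: sub_finite_set (B_high i ik) => jl /AB.
Qed.

Lemma BI_slice_Fin2 (A : set (nat * nat * nat)) i :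
  BI A -> Fin2 [set jl | A (i, jl.1, jl.2)].
Proof. by move=> [k [low high]]; case: (ltnP i k) => [/low|/high/Fin2_finite]. Qed.

Lemma BI_setU (A B : set (nat * nat * nat)) : BI A -> BI B -> BI (A `|` B).
Proof.
move=> A_BI B_BI; have [[ka [_ A_high]] [kb [_ B_high]]] := (A_BI, B_BI).
exists (maxn ka kb); split => i.
  by move=> _; apply: Fin2_setU; apply: BI_slice_Fin2.
rewrite geq_max => /andP[ai bi].
by have := conj (A_high i ai) (B_high i bi); rewrite -finite_setU.
Qed.

(** * conv is below BI, which is below Fin2 *)

Lemma Q01_harmonic_fibre_infinite (p : nat * nat) :
  infinite_set [set x | harmonic_index (toR x) = p].
Proof.
case: p => i j.
have [lo_i lo_hi hi_i] := cell_bounds i (@ltr01 RR).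
have [lo_ij lo_hi_ij hi_ij] := cell_bounds j lo_hi.
have lo_ij_ge0 := ltW (lt_trans lo_i lo_ij).
apply: sub_infinite_set (Q01_itvoo_infinite lo_ij_ge0 lo_hi_ij (le_trans hi_ij hi_i)).
move=> x /andP[x1 x2]; have /andP[_ x_le1] := Q01_to_R_itv x.
have x01 : 0 < toR x <= 1 by rewrite (le_lt_trans lo_ij_ge0 x1) x_le1.
by apply/(harmonic_indexP i j x01); rewrite /cell /= x1 ltW.
Qed.

Lemma finite_range_setU0 (s : nat -> Q01) (C : set RR) :
  finite_set (range s `&` toR @^-1` C) ->
  finite_set (range s `&` toR @^-1` ([set 0] `|` C)).
Proof.
move=> sC_fin; apply: (sub_finite_set (B := toR @^-1` [set 0] `|` (range s `&` toR @^-1` C))).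
  by move=> x [sx [x0|xC]]; [left | right].
by rewrite finite_setU; split => //; exact: finite_preimage (in2W Q01_to_R_inj) (finite_set1 _).
Qed.

(* 0 lies in no cell; harmonic_index sends it to the junk value (0, 0). *)
Lemma harmonic_slice_sub i :
  [set x | (harmonic_index (toR x)).1 = i] `<=` toR @^-1` ([set 0] `|` cell 0 1 i).
Proof.
move=> x /= xi; have /andP[x0 x1] := Q01_to_R_itv x.
have [->|xne0] := eqVneq (toR x) 0; [by left | right].
have x01 : 0 < toR x <= 1 by rewrite lt_neqAle eq_sym xne0 x0.
exact: (cell_indexP i x01).1 xi.
Qed.

Lemma harmonic_fibre_sub i j : [set x | harmonic_index (toR x) = (i, j)] `<=`
  toR @^-1` ([set 0] `|` cell (cell_lo 0 1 i) (cell_hi 0 1 i) j).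
Proof.
move=> x /= xij; have /andP[x0 x1] := Q01_to_R_itv x.
have [->|xne0] := eqVneq (toR x) 0; [by left | right].
have x01 : 0 < toR x <= 1 by rewrite lt_neqAle eq_sym xne0 x0.
exact: (harmonic_indexP i j x01).1 xij.
Qed.

Lemma conv_seq_harmonic_slices (s : nat -> Q01) : conv_seq s ->
  exists k, forall i, (k <= i)%N ->
    finite_set (range s `&` [set x | (harmonic_index (toR x)).1 = i]).
Proof.
move=> [l [_ s_cvg]]; have [k slices_fin] := cvg_finite_cells s_cvg (@ltr01 RR).
exists k => i ki; apply: sub_finite_set (finite_range_setU0 (slices_fin i ki)).
by move=> x [sx /harmonic_slice_sub].
Qed.

Lemma conv_seq_harmonic_fibres (s : nat -> Q01) i : conv_seq s ->
  finite_set [set j | infinite_set (range s `&` [set x | harmonic_index (toR x) = (i, j)])].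
Proof.
move=> [l [_ s_cvg]]; have [_ lo_hi _] := cell_bounds i (@ltr01 RR).
have [K cells_fin] := cvg_finite_cells s_cvg lo_hi.
apply: sub_finite_set (finite_II K) => j /= inf; rewrite ltnNge; apply/negP => Kj.
apply: inf; apply: sub_finite_set (finite_range_setU0 (cells_fin j Kj)).
by move=> x [sx /harmonic_fibre_sub].
Qed.

Section ConvBelowBI.
Variable f : nat * nat * nat -> Q01.
Hypotheses (f_inj : injective f) (f_index : forall t, harmonic_index (toR (f t)) = t.1).

Lemma BI_preimage_range (s : nat -> Q01) : conv_seq s -> BI (f @^-1` range s).
Proof.
move=> s_conv; have [k slices_fin] := conv_seq_harmonic_slices s_conv.
exists k; split => i ik.
  apply: sub_finite_set (conv_seq_harmonic_fibres i s_conv) => j /= column_inf fibre_fin.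
  have column_inj : injective (fun m => f (i, j, m)) by move=> m m' /f_inj[].
  apply: column_inf; apply: sub_finite_set (finite_preimage (in2W column_inj) fibre_fin).
  by move=> m sm; split; last exact: f_index.
have slice_inj : injective (fun jm : nat * nat => f (i, jm.1, jm.2)).
  by move=> [j m] [j' m'] /f_inj[-> ->].
apply: sub_finite_set (finite_preimage (in2W slice_inj) (slices_fin i ik)).
by move=> [j m] sm; split => //; have /(congr1 fst) := f_index (i, j, m).
Qed.

Lemma BI_preimage_conv (A : set Q01) : conv A -> BI (f @^-1` A).
Proof.
move=> [ss [ss_conv A_ss]].
apply: (BI_sub (B := f @^-1` [set x | exists2 s, s \in ss & range s x])).
  by move=> t /A_ss.
elim: ss ss_conv {A_ss} => [|s ss IH] ss_conv.
  by exists 0%N; split => i _; [apply: Fin2_finite |];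
    apply: (sub_finite_set _ (finite_set0 _)) => ? [].
apply: (BI_sub (B := (f @^-1` range s) `|` (f @^-1` [set x | exists2 s, s \in ss & range s x]))).
  by move=> t [s']; rewrite in_cons => /orP[/eqP-> | s'ss] st; [left | right; exists s'].
apply: BI_setU; first exact/BI_preimage_range/ss_conv/mem_head.
by apply: IH => s' s'ss; apply: ss_conv; rewrite in_cons s'ss orbT.
Qed.

End ConvBelowBI.

Lemma conv_below_BI : ideal_below conv BI.
Proof.
have [f [f_bij f_index]] := fibres_bijection Q01_harmonic_fibre_infinite.
by exists f; split => // A; apply: BI_preimage_conv => //; exact: bij_inj.
Qed.

Lemma BI_infinite_rows_finite (A : set (nat * nat * nat)) : BI A ->
  finite_set [set ij : nat * nat | infinite_set [set m | A (ij, m)]].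
Proof.
move=> [k [low high]].
apply: (sub_finite_set (B := \bigcup_(i in `I_k)
    (pair i @` [set j | infinite_set [set m | A (i, j, m)]]))).
  move=> [i j] /= row_inf; exists i; last by exists j.
  rewrite /= ltnNge; apply/negP => /high slice_fin; apply: row_inf.
  by apply: sub_finite_set (finite_image snd slice_fin) => m Aijm; exists (j, m).
by apply: bigcup_finite (finite_II k) _ => i /low; exact: finite_image.
Qed.

Lemma BI_below_Fin2 : ideal_below BI Fin2.
Proof.
have e_inj : injective Cantor.of_nat := can_inj Cantor.cancel_to_of.
exists (fun p => (Cantor.of_nat p.1, p.2)); split.
  exists (fun t => (Cantor.to_nat t.1, t.2)).
    by case=> n m; congr (_, _); exact: Cantor.cancel_to_of.
  by case=> ij m; congr (_, _); exact: Cantor.cancel_of_to.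
move=> A /BI_infinite_rows_finite rows_fin.
exact: (finite_preimage (f := Cantor.of_nat) (in2W e_inj) rows_fin).
Qed.

(** * BI is not below conv *)

Definition dense_on (Z : set Q01) (a b : RR) : Prop :=
  forall a' b', a <= a' -> a' < b' -> b' <= b ->
    infinite_set (Z `&` toR @^-1` [set y | a' < y < b']).

Lemma dense_on_setD_range (Z : set Q01) (a b : RR) (s : nat -> Q01) :
  conv_seq s -> dense_on Z a b -> dense_on (Z `\` range s) a b.
Proof.
move=> [l [_ s_cvg]] Z_dense a' b' aa' a'b' b'b.
have [c [d [a'c cd db' l_apart]]] := subinterval_apart l a'b'.
have := infinite_setD (Z_dense c d (le_trans aa' a'c) cd (le_trans db' b'b))
  (cvg_finite_outside s_cvg l_apart).
apply: sub_infinite_set => x [[Zx /andP[cx xd]] /= not_s].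
split; first by split => // sx; apply: not_s; rewrite /= !ltW.
by rewrite /= (le_lt_trans a'c cx) (lt_le_trans xd db').
Qed.

Lemma dense_on_not_conv (Z : set Q01) (a b : RR) :
  a < b -> dense_on Z a b -> ~ conv Z.
Proof.
move=> ab + [ss [ss_conv Z_ss]].
elim: ss Z ss_conv Z_ss => [|s ss IH] Z ss_conv Z_ss Z_dense.
  apply: (Z_dense a b (lexx a) ab (lexx b)).
  by apply: (sub_finite_set _ (finite_set0 _)) => x [/Z_ss[]].
apply: (IH (Z `\` range s)).
- by move=> s' s'ss; apply: ss_conv; rewrite in_cons s'ss orbT.
- move=> x [Zx not_sx]; have [s'] := Z_ss x Zx.
  by rewrite in_cons => /orP[/eqP-> //|s'ss] s'x; exists s'.
- by apply: dense_on_setD_range Z_dense; apply: ss_conv; exact: mem_head.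
Qed.

Lemma conv_fibres_bounded (pi : Q01 -> nat) (a b : RR) : a < b ->
  (forall Z, Z `<=` toR @^-1` [set y | a < y < b] ->
     (forall m, finite_set (Z `&` pi @^-1` [set m])) -> conv Z) ->
  exists a' b' N, [/\ a <= a', a' < b', b' <= b &
    forall x, a' < toR x < b' -> (pi x < N)%N].
Proof.
move=> ab fibres_conv; apply: contrapT => unbounded.
(* Otherwise every admissible rational interval p contains a point z p with
   pi (z p) >= pickle p; these points are dense on ]a, b[ with finite fibres. *)
pose admissible (p : rat * rat) : Prop :=
  [/\ a <= ratr p.1, ratr p.1 < ratr p.2 :> RR & ratr p.2 <= b].
have x0 : Q01 := exist _ 0 isT.
have witness p : exists x : Q01, admissible p ->
    ratr p.1 < toR x < ratr p.2 /\ (pickle p <= pi x)%N.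
  have [[ap1 p12 p2b]|] := pselect (admissible p); last by exists x0.
  apply: contrapT => none; apply: unbounded.
  exists (ratr p.1), (ratr p.2), (pickle p); split => // x xp.
  by rewrite ltnNge; apply/negP => px; apply: none; exists x.
have [z zP] := choice witness.
have pickle_inj : injective (@pickle (rat * rat)%type) := pcan_inj pickleK.
pose Z := z @` admissible.
have Z_ab : Z `<=` toR @^-1` [set y | a < y < b].
  move=> _ [p [ap1 p12 p2b] <-]; have [/andP[p1z zp2] _] := zP p (And3 ap1 p12 p2b).
  by rewrite /= (le_lt_trans ap1 p1z) (lt_le_trans zp2 p2b).
have Z_fibres m : finite_set (Z `&` pi @^-1` [set m]).
  apply: sub_finite_set (finite_image z (finite_preimage (in2W pickle_inj)
    (finite_II m.+1))) => _ [[p pA <-] /= <-].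
  by exists p => //; have [_] := zP p pA; rewrite /= ltnS.
apply: (dense_on_not_conv ab _ (fibres_conv Z Z_ab Z_fibres)).
move=> a' b' aa' a'b' b'b; apply: (unbounded_infinite (g := pi)) => K.
have [q2] := rat_in_itvoo a'b'; rewrite in_itv /= => /andP[a'q2 q2b'].
have pickle_q2_inj : injective (fun q : rat => pickle (q, q2)).
  by move=> q q' /pickle_inj[].
have [q1 /andP[a'q1 q1q2] Kq] :=
  infinite_unbounded pickle_q2_inj (rat_itvoo_infinite a'q2) K.
have qA : admissible (q1, q2).
  by split; rewrite /= ?(ltW (le_lt_trans aa' a'q1)) ?(le_trans (ltW q2b') b'b).
have [/andP[q1z zq2] Kz] := zP _ qA.
exists (z (q1, q2)); last exact: leq_trans Kq Kz.
split; first by exists (q1, q2).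
by rewrite /= (lt_trans a'q1 q1z) (lt_trans zq2 q2b').
Qed.

Lemma BI_not_below_conv : ~ ideal_below BI conv.
Proof.
move=> [g [_ g_conv]].
have conv_of_image Z : BI (g @` Z) -> conv Z.
  move=> /g_conv [ss [ss_conv cover]].
  by exists ss; split => // x Zx; apply: cover; exists x.
pose pi1 x := (g x).1.1.
have BI_fibres1 Z : (forall m, finite_set (Z `&` pi1 @^-1` [set m])) -> BI (g @` Z).
  move=> Z_fibres; exists 0%N; split => // i _.
  apply: sub_finite_set (finite_image (fun x => ((g x).1.2, (g x).2)) (Z_fibres i)).
  by move=> [j l] /= [x Zx gx]; exists x; rewrite /pi1 /= gx.
have [a1 [b1 [N1 [a1_ge0 a1b1 b1_le1 bound1]]]] :=
  conv_fibres_bounded ltr01 (fun Z _ fib => conv_of_image Z (BI_fibres1 Z fib)).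
pose pi2 x := ((g x).1.1 + (g x).1.2)%N.
have BI_fibres2 Z : Z `<=` toR @^-1` [set y | a1 < y < b1] ->
    (forall m, finite_set (Z `&` pi2 @^-1` [set m])) -> BI (g @` Z).
  move=> Z_ab Z_fibres; exists N1; split => i iN1.
    apply: Fin2_columns_finite => j.
    apply: sub_finite_set (finite_image (fun x => (g x).2) (Z_fibres (i + j)%N)).
    by move=> l /= [x Zx gx]; exists x; rewrite /pi2 /= gx.
  apply: (sub_finite_set _ (finite_set0 _)) => -[j l] /= [x /Z_ab xab gx].
  by have := bound1 x xab; rewrite /pi1 gx /= ltnNge iN1.
have [a2 [b2 [N2 [a1a2 a2b2 b2b1 bound2]]]] :=
  conv_fibres_bounded a1b1 (fun Z Z_ab fib => conv_of_image Z (BI_fibres2 Z Z_ab fib)).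
pose B := [set t : nat * nat * nat | (t.1.1 + t.1.2 < N2)%N].
have B_BI : BI B.
  exists N2; split => i iN2.
    by apply: (@Fin2_fst_bounded _ N2) => -[j l] /= /(leq_ltn_trans (leq_addl _ _)).
  apply: (sub_finite_set _ (finite_set0 _)) => -[j l] /=.
  by move/(leq_ltn_trans (leq_addr _ _)); rewrite ltnNge iN2.
apply: (dense_on_not_conv a2b2 _ (g_conv B B_BI)) => a' b' a2a' a'b' b'b2.
have a'_ge0 : 0 <= a' by rewrite (le_trans a1_ge0 (le_trans a1a2 a2a')).
have b'_le1 : b' <= 1 by rewrite (le_trans b'b2 (le_trans b2b1 b1_le1)).
apply: sub_infinite_set (Q01_itvoo_infinite a'_ge0 a'b' b'_le1) => x /= xab.
split => //; apply: bound2; move: xab => /andP[a'x xb'].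
by rewrite (le_lt_trans a2a' a'x) (lt_le_trans xb' b'b2).
Qed.

(** * Fin2 is not below BI *)

Lemma BI_fibres_bounded (rho : nat * nat * nat -> nat) :
  (forall Z, (forall n, finite_set (Z `&` rho @^-1` [set n])) -> BI Z) ->
  exists i N, forall j l, (rho (i, j, l) < N)%N.
Proof.
move=> fibres_BI; apply: contrapT => unbounded.
(* Otherwise slice i contains points z i t with rho (z i t) >= i + t; together
   they have finite rho-fibres, but each slice of them is infinite. *)
have witness (p : nat * nat) : exists jl : nat * nat, (p.2 <= rho (p.1, jl.1, jl.2))%N.
  apply: contrapT => none; apply: unbounded; exists p.1, p.2 => j l.
  by rewrite ltnNge; apply/negP => le; apply: none; exists (j, l).
have [c cP] := choice witness.
pose z i t := (i, (c (i, i + t)%N).1, (c (i, i + t)%N).2).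
have rho_z i t : (i + t <= rho (z i t))%N := cP (i, i + t)%N.
pose Z := [set z p.1 p.2 | p in [set: nat * nat]].
have [k [_ Z_high]] : BI Z.
  apply: fibres_BI => n.
  apply: sub_finite_set (finite_image (fun p => z p.1 p.2)
    (finite_setX (finite_II n.+1) (finite_II n.+1))) => _ [[[i t] _ <-] /= rho_n].
  exists (i, t) => //; have := rho_z i t; rewrite rho_n => it_n.
  by split; rewrite /= ltnS (leq_trans _ it_n) ?leq_addr ?leq_addl.
have := Z_high k (leqnn k); apply: (unbounded_infinite (g := fun jl => rho (k, jl.1, jl.2))) => K.
exists (c (k, k + K)%N); first by exists (k, K).
exact: leq_trans (leq_addl k K) (rho_z k K).
Qed.

Lemma Fin2_not_below_BI : ~ ideal_below Fin2 BI.
Proof.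
move=> [h [_ h_BI]].
have [i [N bound]] : exists i N, forall j l, ((h (i, j, l)).1 < N)%N.
  apply: (BI_fibres_bounded (rho := fun t => (h t).1)) => Z Z_fibres.
  apply: (BI_sub (B := h @^-1` (h @` Z))); first by move=> t Zt; exists t.
  apply/h_BI/Fin2_columns_finite => n.
  apply: sub_finite_set (finite_image (fun t => (h t).2) (Z_fibres n)).
  by move=> m /= [t Zt htn]; exists t; rewrite /= htn.
have A_Fin2 : Fin2 [set p : nat * nat | (p.1 < N)%N] by apply: (@Fin2_fst_bounded _ N).
have /h_BI/(BI_slice_Fin2 i) slice_Fin2 := A_Fin2.
by apply: not_Fin2_setT; apply: Fin2_sub slice_Fin2 => jl _; exact: bound.
Qed.

Theorem proposition4p6 :
  ideal_below conv BI /\ ideal_below BI Fin2 /\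
  ~ ideal_below BI conv /\ ~ ideal_below Fin2 BI.
Proof.
split; first exact: conv_below_BI.
split; first exact: BI_below_Fin2.
split; [exact: BI_not_below_conv | exact: Fin2_not_below_BI].
Qed.
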